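(* Fix an input $X=[x_1,\dots,x_T]$ with $\|x_t\|_2\le R_x$ and an initial state $h_0\in[-1,1]^{\hat D}$. Let $\theta=(W,U)$ and $\theta+\delta=(W+\delta_W,U+\delta_U)$, and let $h_T=h_T(\theta)$, $h_T'=h_T(\theta+\delta)$ be the FastRNN final states on $X$ with $\beta=1-\alpha$. Then $$\|h_T'-h_T\|_2\le \alpha\big(\sqrt{\hat D}\|\delta_U\|_2+R_x\|\delta_W\|_2\big)\sum_{j=0}^{T-1}(\alpha\|U\|_2+\beta)^j,$$ and if moreover $\alpha\le \frac{1}{T\,|\|U\|_2-1|}$, then $$\|h_T'-h_T\|_2\le 2\alpha T\big(\sqrt{\hat D}\|\delta_U\|_2+R_x\|\delta_W\|_2\big).$$
   Context: FastRNN recursion: $h_t=\alpha\,\sigma(Wx_t+Uh_{t-1})+\beta h_{t-1}$ with $W\in\mathbb R^{\hat D\times D}$, $U\in\mathbb R^{\hat D\times\hat D}$, $0\le\alpha,\beta\le1$, and $\sigma$ a coordinatewise $1$-Lipschitz nonlinearity taking values in $[-1,1]$. Norms on matrices are spectral norms. *)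

From Stdlib Require Import Reals Lra ClassicalEpsilon.
Open Scope R_scope.

Fixpoint fsum (n : nat) (f : nat -> R) : R :=
  match n with
  | O => 0
  | S k => fsum k f + f k
  end.

(* Vectors of R^n are functions nat -> R (only coordinates 0..n-1 matter);
   m x n matrices are functions nat -> nat -> R (row, column). *)
Definition vec := nat -> R.
Definition mat := nat -> nat -> R.

Definition vnorm (n : nat) (v : vec) : R := sqrt (fsum n (fun i => v i ^ 2)).

Definition mv (n : nat) (A : mat) (x : vec) : vec :=
  fun i => fsum n (fun j => A i j * x j).

Definition vadd (u v : vec) : vec := fun i => u i + v i.
Definition madd (A B : mat) : mat := fun i j => A i j + B i j.

Definition spec_norm (m n : nat) (A : mat) : R :=
  epsilon (inhabits 0)
    (is_lub (fun r => exists x : vec, vnorm n x <= 1 /\ r = vnorm m (mv n A x))).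

Fixpoint fastrnn (D Dh : nat) (sigma : R -> R) (alpha beta : R)
    (W U : mat) (X : nat -> vec) (h0 : vec) (t : nat) : vec :=
  match t with
  | O => h0
  | S k =>
      let h := fastrnn D Dh sigma alpha beta W U X h0 k in
      fun i => alpha * sigma (mv D W (X (S k)) i + mv Dh U h i) + beta * h i
  end.

(* The error e_k = ||h'_k - h_k|| obeys e_{k+1} <= alpha C + (alpha ||U|| + beta) e_k: the
   convex combination splits the new error into alpha times a Lipschitz image of the
   pre-activation error and beta times the old one, and the pre-activation error is at most
   ||dU|| ||h'_k|| + ||dW|| ||x|| + ||U|| e_k with ||h'_k|| <= sqrt Dh because FastRNN states stay
   in the cube [-1,1]^Dh.  Unrolling from e_0 = 0 gives the geometric sum; under the step-size
   condition every ratio is at most 1 + a with a T <= 1, and (1 + a)^j <= 1 + 2 a j bounds the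
   sum by 2T. *)

From Stdlib Require Import Reals Lra Psatz ClassicalEpsilon.
Open Scope R_scope.

Lemma fsum_ext n f g : (forall i, (i < n)%nat -> f i = g i) -> fsum n f = fsum n g.
Proof.
  induction n as [|n IH]; intros H; simpl; [reflexivity|].
  rewrite IH by (intros; apply H; lia). rewrite H by lia. reflexivity.
Qed.

Lemma fsum_le n f g : (forall i, (i < n)%nat -> f i <= g i) -> fsum n f <= fsum n g.
Proof.
  induction n as [|n IH]; intros H; simpl; [lra|].
  apply Rplus_le_compat; [apply IH; intros; apply H; lia | apply H; lia].
Qed.

Lemma fsum_const n c : fsum n (fun _ => c) = INR n * c.
Proof. induction n as [|n IH]; simpl fsum; [simpl; ring | rewrite IH, S_INR; ring]. Qed.

Lemma fsum_ge0 n f : (forall i, (i < n)%nat -> 0 <= f i) -> 0 <= fsum n f.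
Proof.
  intros H. rewrite <- (Rmult_0_r (INR n)), <- fsum_const. exact (fsum_le n _ _ H).
Qed.

Lemma fsum_add n f g : fsum n (fun j => f j + g j) = fsum n f + fsum n g.
Proof. induction n as [|n IH]; simpl; [ring | rewrite IH; ring]. Qed.

Lemma fsum_sub n f g : fsum n (fun j => f j - g j) = fsum n f - fsum n g.
Proof. induction n as [|n IH]; simpl; [ring | rewrite IH; ring]. Qed.

Lemma fsum_scal n c f : fsum n (fun j => c * f j) = c * fsum n f.
Proof. induction n as [|n IH]; simpl; [ring | rewrite IH; ring]. Qed.

Lemma fsum_pow_succ q k :
  fsum (S k) (fun j => q ^ j) = 1 + q * fsum k (fun j => q ^ j).
Proof.
  induction k as [|k IH]; [simpl; ring|].
  change (fsum (S (S k)) (fun j => q ^ j)) with (fsum (S k) (fun j => q ^ j) + q ^ S k).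
  rewrite IH at 1. cbn [fsum pow]. ring.
Qed.

Lemma fsum_affine n a : fsum n (fun j => 1 + a * INR j) = INR n + a * INR n * (INR n - 1) / 2.
Proof. induction n as [|n IH]; simpl fsum; [simpl; field | rewrite IH, S_INR; field]. Qed.

Lemma quadratic_ge0_discriminant A B C :
  0 <= A -> (forall t, 0 <= A * t ^ 2 + 2 * B * t + C) -> B ^ 2 <= A * C.
Proof.
  intros HA Hq. destruct (Rle_lt_or_eq_dec 0 A HA) as [Apos | <-].
  - specialize (Hq (- B / A)).
    replace (A * (- B / A) ^ 2 + 2 * B * (- B / A) + C) with ((A * C - B ^ 2) / A) in Hq
      by (field; lra).
    apply Rmult_le_compat_l with (r := A) in Hq; [|lra].
    replace (A * ((A * C - B ^ 2) / A)) with (A * C - B ^ 2) in Hq by (field; lra). lra.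
  - destruct (Req_dec B 0) as [-> | Bnz]; [lra|].
    specialize (Hq (- (C + 1) / (2 * B))).
    replace (0 * (- (C + 1) / (2 * B)) ^ 2 + 2 * B * (- (C + 1) / (2 * B)) + C) with (-1) in Hq
      by (field; auto). lra.
Qed.

Lemma fsum_Cauchy_Schwarz n u v :
  fsum n (fun i => u i * v i) ^ 2 <= fsum n (fun i => u i ^ 2) * fsum n (fun i => v i ^ 2).
Proof.
  apply quadratic_ge0_discriminant; [apply fsum_ge0; intros; apply pow2_ge_0|].
  intros t.
  assert (Hsq : fsum n (fun i => (t * u i + v i) ^ 2)
                = fsum n (fun i => u i ^ 2) * t ^ 2 + 2 * fsum n (fun i => u i * v i) * t
                  + fsum n (fun i => v i ^ 2)).
  { induction n as [|n IH]; cbn [fsum]; [ring | rewrite IH; ring]. }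
  rewrite <- Hsq. apply fsum_ge0. intros; apply pow2_ge_0.
Qed.

Lemma vnorm_ge0 n v : 0 <= vnorm n v.
Proof. apply sqrt_pos. Qed.

Lemma vnorm_ext n u v : (forall i, (i < n)%nat -> u i = v i) -> vnorm n u = vnorm n v.
Proof. intros H. unfold vnorm. f_equal. apply fsum_ext. intros i Hi. rewrite H; auto. Qed.

Lemma vnorm0 n : vnorm n (fun _ => 0) = 0.
Proof. unfold vnorm. rewrite fsum_const, pow_i, Rmult_0_r by lia. apply sqrt_0. Qed.

Lemma vnorm_scal n c v : vnorm n (fun i => c * v i) = Rabs c * vnorm n v.
Proof.
  unfold vnorm. rewrite (fsum_ext n _ (fun i => c ^ 2 * v i ^ 2)) by (intros; ring).
  rewrite fsum_scal, sqrt_mult_alt, <- pow2_abs, sqrt_pow2 by apply pow2_ge_0 || apply Rabs_pos.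
  reflexivity.
Qed.

Lemma vnorm_le_abs n u v :
  (forall i, (i < n)%nat -> Rabs (u i) <= Rabs (v i)) -> vnorm n u <= vnorm n v.
Proof.
  intros H. apply sqrt_le_1_alt, fsum_le. intros i Hi.
  rewrite <- (pow2_abs (u i)), <- (pow2_abs (v i)). apply pow_incr.
  split; [apply Rabs_pos | auto].
Qed.

Lemma vnorm_cube n v : (forall i, (i < n)%nat -> -1 <= v i <= 1) -> vnorm n v <= sqrt (INR n).
Proof.
  intros H. apply sqrt_le_1_alt. rewrite <- (Rmult_1_r (INR n)), <- fsum_const.
  apply fsum_le. intros i Hi. specialize (H i Hi). nra.
Qed.

Lemma vnorm_triangle n u v : vnorm n (fun i => u i + v i) <= vnorm n u + vnorm n v.
Proof.
  unfold vnorm.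
  set (A := fsum n (fun i => u i ^ 2)). set (B := fsum n (fun i => u i * v i)).
  set (C := fsum n (fun i => v i ^ 2)).
  assert (HA : 0 <= A) by (apply fsum_ge0; intros; apply pow2_ge_0).
  assert (HC : 0 <= C) by (apply fsum_ge0; intros; apply pow2_ge_0).
  assert (Hsq : fsum n (fun i => (u i + v i) ^ 2) = A + 2 * B + C).
  { unfold A, B, C. rewrite <- fsum_scal, <- !fsum_add. apply fsum_ext. intros; ring. }
  assert (HB : B <= sqrt A * sqrt C).
  { destruct (Rle_or_lt B 0).
    - pose proof (Rmult_le_pos _ _ (sqrt_pos A) (sqrt_pos C)). lra.
    - rewrite <- (sqrt_pow2 B), <- sqrt_mult_alt by lra.
      apply sqrt_le_1_alt, fsum_Cauchy_Schwarz. }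
  rewrite Hsq, <- (sqrt_pow2 (sqrt A + sqrt C))
    by (apply Rplus_le_le_0_compat; apply sqrt_pos).
  apply sqrt_le_1_alt.
  replace ((sqrt A + sqrt C) ^ 2) with (sqrt A * sqrt A + sqrt C * sqrt C + 2 * (sqrt A * sqrt C))
    by ring.
  rewrite !sqrt_sqrt by auto. lra.
Qed.

Lemma mv_sub n A x y i : mv n A (fun j => y j - x j) i = mv n A y i - mv n A x i.
Proof. unfold mv. rewrite <- fsum_sub. apply fsum_ext. intros; ring. Qed.

Lemma mv_madd n A B x i : mv n (madd A B) x i = mv n A x i + mv n B x i.
Proof. unfold mv, madd. rewrite <- fsum_add. apply fsum_ext. intros; ring. Qed.

Lemma mv_scal n A c x i : mv n A (fun j => c * x j) i = c * mv n A x i.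
Proof. unfold mv. rewrite <- fsum_scal. apply fsum_ext. intros; ring. Qed.

Definition frobenius_norm (m n : nat) (A : mat) : R :=
  sqrt (fsum m (fun i => fsum n (fun j => A i j ^ 2))).

Lemma vnorm_mv_le_frobenius m n A x : vnorm m (mv n A x) <= frobenius_norm m n A * vnorm n x.
Proof.
  unfold vnorm, frobenius_norm.
  rewrite <- sqrt_mult_alt by (apply fsum_ge0; intros; apply fsum_ge0; intros; apply pow2_ge_0).
  apply sqrt_le_1_alt. rewrite Rmult_comm, <- fsum_scal. apply fsum_le. intros i Hi.
  unfold mv. rewrite Rmult_comm. apply fsum_Cauchy_Schwarz.
Qed.

Lemma spec_norm_lub m n A :
  is_lub (fun r => exists x : vec, vnorm n x <= 1 /\ r = vnorm m (mv n A x)) (spec_norm m n A).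
Proof.
  unfold spec_norm. apply epsilon_spec.
  destruct (completeness (fun r => exists x : vec, vnorm n x <= 1 /\ r = vnorm m (mv n A x)))
    as [l Hl]; [| | exists l; exact Hl].
  - exists (frobenius_norm m n A). intros r [x [Hx ->]].
    eapply Rle_trans; [apply vnorm_mv_le_frobenius|].
    pose proof (sqrt_pos (fsum m (fun i => fsum n (fun j => A i j ^ 2)))).
    rewrite <- (Rmult_1_r (frobenius_norm m n A)) at 2. apply Rmult_le_compat_l; auto.
  - exists (vnorm m (mv n A (fun _ => 0))), (fun _ => 0). rewrite vnorm0. split; [lra | auto].
Qed.

Lemma spec_norm_ge0 m n A : 0 <= spec_norm m n A.
Proof.
  eapply Rle_trans; [apply (vnorm_ge0 m (mv n A (fun _ => 0)))|].
  apply (spec_norm_lub m n A). exists (fun _ => 0). rewrite vnorm0. split; [lra | auto].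
Qed.

Lemma vnorm_mv_le m n A x : vnorm m (mv n A x) <= spec_norm m n A * vnorm n x.
Proof.
  destruct (Rle_lt_or_eq_dec 0 _ (vnorm_ge0 n x)) as [Hpos | H0].
  - set (r := vnorm n x) in *.
    assert (Hr : 0 < / r) by (apply Rinv_0_lt_compat; auto).
    assert (Hunit : vnorm m (mv n A (fun j => / r * x j)) <= spec_norm m n A).
    { apply (spec_norm_lub m n A). eexists; split; [|reflexivity].
      rewrite vnorm_scal, Rabs_right, Rinv_l; fold r; lra. }
    rewrite (vnorm_ext m _ (fun i => / r * mv n A x i)), vnorm_scal, Rabs_right in Hunit
      by (intros; apply mv_scal || lra).
    apply Rmult_le_compat_l with (r := r) in Hunit; [|lra].
    rewrite <- Rmult_assoc, Rinv_r in Hunit; lra.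
  - pose proof (vnorm_mv_le_frobenius m n A x). rewrite <- H0 in *. lra.
Qed.

Lemma fastrnn_S D Dh sigma alpha beta W U X h0 k i :
  fastrnn D Dh sigma alpha beta W U X h0 (S k) i =
  alpha * sigma (mv D W (X (S k)) i + mv Dh U (fastrnn D Dh sigma alpha beta W U X h0 k) i)
  + beta * fastrnn D Dh sigma alpha beta W U X h0 k i.
Proof. reflexivity. Qed.

Lemma fastrnn_cube D Dh sigma alpha W U X h0 :
  (forall a, -1 <= sigma a <= 1) -> 0 <= alpha <= 1 ->
  (forall i, (i < Dh)%nat -> -1 <= h0 i <= 1) ->
  forall k i, (i < Dh)%nat -> -1 <= fastrnn D Dh sigma alpha (1 - alpha) W U X h0 k i <= 1.
Proof.
  intros Hsig Halpha Hh0 k. induction k as [|k IH]; intros i Hi; [auto|].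
  rewrite fastrnn_S. specialize (IH i Hi).
  set (s := sigma _). assert (-1 <= s <= 1) by apply Hsig.
  set (h := fastrnn _ _ _ _ _ _ _ _ _ _ _) in *. nra.
Qed.

Lemma linear_recurrence_le (e : nat -> R) (c q : R) (n : nat) :
  0 <= q -> e 0%nat <= 0 -> (forall k, (k < n)%nat -> e (S k) <= c + q * e k) ->
  forall k, (k <= n)%nat -> e k <= c * fsum k (fun j => q ^ j).
Proof.
  intros Hq He0 Hstep k. induction k as [|k IH]; intros Hk; [simpl; lra|].
  eapply Rle_trans; [apply Hstep; lia|]. rewrite fsum_pow_succ.
  specialize (IH ltac:(lia)). apply Rmult_le_compat_l with (r := q) in IH; auto. nra.
Qed.

Lemma pow_1plus_le_quadratic a j :
  0 <= a -> a * INR j <= 1 -> (1 + a) ^ j <= 1 + a * INR j + (a * INR j) ^ 2.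
Proof.
  intros Ha. induction j as [|j IH]; intros Hj; [simpl; lra|].
  rewrite S_INR in *. pose proof (pos_INR j).
  assert (Haj : 0 <= a * INR j) by nra.
  specialize (IH ltac:(nra)). simpl pow in *.
  apply Rle_trans with ((1 + a) * (1 + a * INR j + a * INR j * (a * INR j * 1))).
  - apply Rmult_le_compat_l; lra.
  - nra.
Qed.

Lemma fsum_pow_le_twice n q a :
  0 <= q -> 0 <= a -> q <= 1 + a -> a * INR n <= 1 -> fsum n (fun j => q ^ j) <= 2 * INR n.
Proof.
  intros Hq Ha Hqa Han. pose proof (pos_INR n).
  apply Rle_trans with (fsum n (fun j => 1 + 2 * a * INR j)).
  - apply fsum_le. intros j Hj.
    assert (Hjn : INR j <= INR n) by (apply le_INR; lia). pose proof (pos_INR j).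
    assert (Haj : 0 <= a * INR j <= 1) by nra.
    apply Rle_trans with ((1 + a) ^ j); [apply pow_incr; lra|].
    eapply Rle_trans; [apply pow_1plus_le_quadratic; lra|]. nra.
  - rewrite fsum_affine. nra.
Qed.

Section Perturbation.

Variables (D Dh : nat) (sigma : R -> R) (alpha : R) (W U dW dU : mat) (X : nat -> vec)
  (Rx : R) (h0 : vec) (T : nat).
Hypothesis sigma_Lipschitz : forall a b, Rabs (sigma a - sigma b) <= Rabs (a - b).
Hypothesis sigma_range : forall a, -1 <= sigma a <= 1.
Hypothesis alpha_range : 0 <= alpha <= 1.
Hypothesis input_bound : forall t, (1 <= t <= T)%nat -> vnorm D (X t) <= Rx.
Hypothesis h0_cube : forall i, (i < Dh)%nat -> -1 <= h0 i <= 1.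

Let h k := fastrnn D Dh sigma alpha (1 - alpha) W U X h0 k.
Let h' k := fastrnn D Dh sigma alpha (1 - alpha) (madd W dW) (madd U dU) X h0 k.
Let err k := vnorm Dh (fun i => h' k i - h k i).
Let C := sqrt (INR Dh) * spec_norm Dh Dh dU + Rx * spec_norm Dh D dW.

Lemma preactivation_error_le k : (k < T)%nat ->
  vnorm Dh (fun i => (mv D (madd W dW) (X (S k)) i + mv Dh (madd U dU) (h' k) i)
                     - (mv D W (X (S k)) i + mv Dh U (h k) i))
  <= C + spec_norm Dh Dh U * err k.
Proof.
  intros Hk.
  rewrite (vnorm_ext Dh _ (fun i => (mv Dh dU (h' k) i + mv D dW (X (S k)) i)
                                    + mv Dh U (fun j => h' k j - h k j) i))
    by (intros; rewrite !mv_madd, mv_sub; ring).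
  eapply Rle_trans; [apply vnorm_triangle|].
  apply Rplus_le_compat; [|apply vnorm_mv_le].
  eapply Rle_trans; [apply vnorm_triangle|]. unfold C.
  rewrite (Rmult_comm (sqrt _)), (Rmult_comm Rx).
  apply Rplus_le_compat; eapply Rle_trans; try apply vnorm_mv_le;
    apply Rmult_le_compat_l; try apply spec_norm_ge0.
  - apply vnorm_cube. intros i Hi. exact (fastrnn_cube _ _ _ _ _ _ _ _ sigma_range alpha_range
                                                      h0_cube k i Hi).
  - apply input_bound; lia.
Qed.

Lemma err_succ_le k : (k < T)%nat ->
  err (S k) <= alpha * C + (alpha * spec_norm Dh Dh U + (1 - alpha)) * err k.
Proof.
  intros Hk. unfold err at 1.
  set (p := fun i => mv D W (X (S k)) i + mv Dh U (h k) i).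
  set (p' := fun i => mv D (madd W dW) (X (S k)) i + mv Dh (madd U dU) (h' k) i).
  rewrite (vnorm_ext Dh _ (fun i => alpha * (sigma (p' i) - sigma (p i))
                                    + (1 - alpha) * (h' k i - h k i)))
    by (intros; unfold p, p', h, h'; rewrite !fastrnn_S; ring).
  eapply Rle_trans; [apply vnorm_triangle|].
  rewrite !vnorm_scal, (Rabs_right alpha), (Rabs_right (1 - alpha)) by lra. fold (err k).
  assert (Hsig : vnorm Dh (fun i => sigma (p' i) - sigma (p i))
                 <= C + spec_norm Dh Dh U * err k).
  { eapply Rle_trans; [|apply (preactivation_error_le k Hk)].
    apply vnorm_le_abs. intros; apply sigma_Lipschitz. }
  apply Rmult_le_compat_l with (r := alpha) in Hsig; lra.
Qed.

Lemma err_le_geometric :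
  err T <= alpha * C * fsum T (fun j => (alpha * spec_norm Dh Dh U + (1 - alpha)) ^ j).
Proof.
  pose proof (spec_norm_ge0 Dh Dh U).
  apply (linear_recurrence_le err _ _ T); auto; [nra | | apply err_succ_le].
  unfold err. rewrite (vnorm_ext _ _ (fun _ => 0)), vnorm0 by (intros; unfold h, h'; simpl; ring). lra.
Qed.

End Perturbation.

Theorem mainTheorem4
  (D Dh T : nat) (sigma : R -> R)
  (Hsig_lip : forall a b, Rabs (sigma a - sigma b) <= Rabs (a - b))
  (Hsig_rng : forall a, -1 <= sigma a <= 1)
  (alpha beta : R) (Halpha : 0 <= alpha <= 1) (Hbeta : beta = 1 - alpha)
  (W U dW dU : mat) (X : nat -> vec) (Rx : R)
  (HX : forall t, (1 <= t <= T)%nat -> vnorm D (X t) <= Rx)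
  (h0 : vec) (Hh0 : forall i, (i < Dh)%nat -> -1 <= h0 i <= 1) :
  let hT := fastrnn D Dh sigma alpha beta W U X h0 T in
  let hT' := fastrnn D Dh sigma alpha beta (madd W dW) (madd U dU) X h0 T in
  let nU := spec_norm Dh Dh U in
  let C := sqrt (INR Dh) * spec_norm Dh Dh dU + Rx * spec_norm Dh D dW in
  vnorm Dh (fun i => hT' i - hT i)
    <= alpha * C * fsum T (fun j => (alpha * nU + beta) ^ j)
  /\
  (alpha * INR T * Rabs (nU - 1) <= 1 ->
   vnorm Dh (fun i => hT' i - hT i) <= 2 * alpha * INR T * C).
Proof.
  intros hT hT' nU C. subst beta.
  pose proof (err_le_geometric D Dh sigma alpha W U dW dU X Rx h0 T
                Hsig_lip Hsig_rng Halpha HX Hh0) as Hgeom.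
  split; [exact Hgeom|]. intros Hstep.
  destruct T as [|T'].
  { cbn [fsum INR] in *. rewrite Rmult_0_r in Hgeom. rewrite Rmult_0_r, Rmult_0_l. exact Hgeom. }
  assert (HRx : 0 <= Rx) by (eapply Rle_trans; [apply vnorm_ge0 | apply (HX 1%nat); lia]).
  assert (HC : 0 <= C).
  { pose proof (spec_norm_ge0 Dh Dh dU). pose proof (spec_norm_ge0 Dh D dW).
    pose proof (sqrt_pos (INR Dh)). unfold C. nra. }
  assert (HnU : 0 <= nU) by apply spec_norm_ge0.
  assert (Hratio : alpha * nU + (1 - alpha) <= 1 + alpha * Rabs (nU - 1)).
  { pose proof (Rle_abs (nU - 1)). nra. }
  assert (Hsum : fsum (S T') (fun j => (alpha * nU + (1 - alpha)) ^ j) <= 2 * INR (S T')).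
  { apply (fsum_pow_le_twice _ _ (alpha * Rabs (nU - 1))); try nra.
    apply Rmult_le_pos; [lra | apply Rabs_pos]. }
  eapply Rle_trans; [exact Hgeom|].
  replace (2 * alpha * INR (S T') * C) with (alpha * C * (2 * INR (S T'))) by ring.
  apply Rmult_le_compat_l; [apply Rmult_le_pos; lra | exact Hsum].
Qed.
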